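(* Let $\mathbb{X},\mathbb{Y}$ be finite-dimensional real polyhedral Banach spaces with $\min\{\dim\mathbb{X},\dim\mathbb{Y}\}>1$. Then no rank $1$ operator lies in the relative interior of any edge of the unit ball of $\mathbb{L}(\mathbb{X},\mathbb{Y})$.
   Context: Polyhedral: the closed unit ball has finitely many extreme points; $\mathbb{L}(\mathbb{X},\mathbb{Y})$ carries the operator norm. A convex subset $F$ of the unit sphere is a face of the unit ball if whenever $x_1,x_2$ are unit vectors and $(1-t)x_1+tx_2\in F$ for some $0<t<1$, then $x_1,x_2\in F$; its dimension is $\dim\operatorname{span}\{v-w:v,w\in F\}$. An edge is a face of dimension $1$. *)

From HB Require Import structures.
From mathcomp Require Import all_boot all_order all_algebra.
From mathcomp Require Import all_classical all_reals.
Set Implicit Arguments. Unset Strict Implicit. Unset Printing Implicit Defensive.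
Import Order.TTheory GRing.Theory Num.Theory.
Local Open Scope classical_set_scope.
Local Open Scope ring_scope.

Section Defs.
Variable R : realType.

Definition is_norm (V : lmodType R) (N : V -> R) : Prop :=
  [/\ forall x, 0 <= N x,
      forall x, N x = 0 -> x = 0,
      forall (a : R) x, N (a *: x) = `|a| * N x
    & forall x y, N (x + y) <= N x + N y].

Definition unit_ball (V : lmodType R) (N : V -> R) : set V := [set x | N x <= 1].

Definition extreme_point (V : lmodType R) (N : V -> R) (x : V) : Prop :=
  N x <= 1 /\
  forall (y z : V) (t : R), N y <= 1 -> N z <= 1 -> 0 < t < 1 ->
    x = (1 - t) *: y + t *: z -> y = z.

Definition polyhedral (V : lmodType R) (N : V -> R) : Prop :=
  finite_set [set x | extreme_point N x].

Definition convex_set (V : lmodType R) (F : set V) : Prop :=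
  forall x y (t : R), F x -> F y -> 0 <= t <= 1 -> F ((1 - t) *: x + t *: y).

Definition is_face (V : lmodType R) (N : V -> R) (F : set V) : Prop :=
  [/\ convex_set F,
      F `<=` [set x | N x = 1]
    & forall x1 x2 (t : R), N x1 = 1 -> N x2 = 1 -> 0 < t < 1 ->
        F ((1 - t) *: x1 + t *: x2) -> F x1 /\ F x2].

Definition is_span_diff (V : vectType R) (F : set V) (U : {vspace V}) : Prop :=
  (forall v w, F v -> F w -> v - w \in U) /\
  (forall W : {vspace V}, (forall v w, F v -> F w -> v - w \in W) -> (U <= W)%VS).

Definition face_dim (V : vectType R) (F : set V) (k : nat) : Prop :=
  exists U : {vspace V}, is_span_diff F U /\ \dim U = k.

Definition is_edge (V : vectType R) (N : V -> R) (F : set V) : Prop :=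
  is_face N F /\ face_dim F 1.

(* relative interior of F (interior within its affine hull), w.r.t. the norm N *)
Definition rel_interior (V : vectType R) (N : V -> R) (F : set V) : set V :=
  [set T | F T /\ exists U : {vspace V}, is_span_diff F U /\
     exists2 e : R, 0 < e & forall u, u \in U -> N u < e -> F (T + u)].

(* operator norm of T : 'M_(n,m), acting as x |-> x *m T from (R^n,NX) to (R^m,NY) *)
Definition opnorm (n m : nat) (NX : 'rV[R]_n -> R) (NY : 'rV[R]_m -> R)
  (T : 'M[R]_(n, m)) : R :=
  sup [set NY (x *m T) | x in [set x | NX x <= 1]].

End Defs.

From mathcomp Require Import all_boot all_order all_algebra.
From mathcomp Require Import all_classical all_reals all_analysis.
From mathcomp Require Import ring lra.
Set Implicit Arguments. Unset Strict Implicit. Unset Printing Implicit Defensive.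
Import Order.TTheory GRing.Theory Num.Theory.
Import numFieldNormedType.Exports.
Local Open Scope classical_set_scope.
Local Open Scope ring_scope.

(* A rank-one operator T = c r of norm one, with NY r = 1, lying in the relative
   interior of an edge F has a one-dimensional direction space U, and every E with
   ‖T ± E‖ <= 1 belongs to U because T is the midpoint of T ± E and F is a face.
   If r is not extreme, r ± z stays in the unit ball for some z != 0, and each
   e_i z (one per row) is such a direction: n >= 2 independent directions.
   If r is extreme, each D in U annihilates the top face {x | <x, c> = 1} of the
   unit ball of X, so each column g of D vanishes there; polyhedrality of X then
   gives |<x, c>| + d |<x, g>| <= 1, so each g e_j (one per column) is a direction,
   which forces g = 0 when m >= 2. Hence U = 0, contradicting \dim U = 1. *)

Section IsNorm.
Variables (R : realType) (V : lmodType R) (N : V -> R).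
Hypothesis hN : is_norm N.

Lemma isnorm_ge0 x : 0 <= N x.
Proof. by case: hN. Qed.

Lemma isnorm_eq0 x : N x = 0 -> x = 0.
Proof. by case: hN => _ h _ _; apply: h. Qed.

Lemma isnormZ a x : N (a *: x) = `|a| * N x.
Proof. by case: hN. Qed.

Lemma isnormD x y : N (x + y) <= N x + N y.
Proof. by case: hN. Qed.

Lemma isnorm0 : N 0 = 0.
Proof. by rewrite -(scale0r 0) isnormZ normr0 mul0r. Qed.

Lemma isnormN x : N (- x) = N x.
Proof. by rewrite -scaleN1r isnormZ normrN normr1 mul1r. Qed.

Lemma isnorm_gt0 x : x != 0 -> 0 < N x.
Proof.
by move=> x0; rewrite lt_neqAle isnorm_ge0 andbT eq_sym; apply: contra_neq x0 => /isnorm_eq0.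
Qed.

Lemma isnorm_sum I (r : seq I) (F : I -> V) :
  N (\sum_(i <- r) F i) <= \sum_(i <- r) N (F i).
Proof.
elim: r => [|a r IH]; first by rewrite !big_nil isnorm0.
by rewrite !big_cons (le_trans (isnormD _ _)) // lerD2l.
Qed.

Lemma isnorm_lipschitz x y : `|N x - N y| <= N (x - y).
Proof.
have hx : N x <= N (x - y) + N y by rewrite (le_trans _ (isnormD _ _)) // subrK.
have hy : N y <= N (x - y) + N x.
  by rewrite -opprB isnormN (le_trans _ (isnormD _ _)) // subrK.
by rewrite ler_norml; apply/andP; split; lra.
Qed.

End IsNorm.

Section RowNorms.
Variables (R : realType) (n : nat).
Implicit Types (x y : 'rV[R]_n) (N : 'rV[R]_n -> R).

Lemma lipschitz_continuous (f : 'rV[R]_n -> R) (L : R) :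
  (forall x y, `|f x - f y| <= L * `|x - y|) -> continuous f.
Proof.
move=> hf x A /= /(nbhs_ballP (f x)) [e e0 eA].
have L1 : 0 < `|L| + 1 by rewrite ltr_pwDr.
apply/nbhs_ballP; exists (e / (`|L| + 1)); first by rewrite /= divr_gt0.
move=> y; rewrite -ball_normE /= => xy; apply: eA; rewrite -ball_normE /=.
apply: le_lt_trans (hf x y) _; apply: (@le_lt_trans _ _ ((`|L| + 1) * `|x - y|)).
  by rewrite ler_wpM2r // (le_trans (ler_norm L)) // lerDl.
by rewrite -ltr_pdivlMl // mulrC.
Qed.

Lemma coord_le_mxnorm x i : `|x 0 i| <= `|x|.
Proof.
by rewrite [leRHS]/Num.norm /= mx_normrE; apply/bigmax_geP; right; exists (ord0, i).
Qed.

Lemma isnorm_le_mxnorm N : is_norm N -> exists2 L, 0 <= L & forall x, N x <= L * `|x|.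
Proof.
move=> hN; exists (\sum_i N (delta_mx 0 i)) => [|x].
  by apply: sumr_ge0 => i _; apply: isnorm_ge0.
rewrite {1}(row_sum_delta x) mulr_suml; apply: (le_trans (isnorm_sum hN _ _)).
by apply: ler_sum => i _; rewrite (isnormZ hN) mulrC ler_wpM2l ?isnorm_ge0 ?coord_le_mxnorm.
Qed.

Lemma isnorm_continuous N : is_norm N -> continuous N.
Proof.
move=> hN; have [L _ hL] := isnorm_le_mxnorm hN.
by apply: (@lipschitz_continuous N L) => x y; apply: le_trans (isnorm_lipschitz hN x y) (hL _).
Qed.

Lemma mxnorm_le_isnorm N : is_norm N -> exists2 C, 0 < C & forall x, `|x| <= C * N x.
Proof.
move=> hN; have [n0|n_gt0] := posnP n.
  exists 1 => // x; have -> : x = 0 by apply/rowP => i; have := ltn_ord i; rewrite {2}n0.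
  by rewrite normr0 mul1r isnorm_ge0.
pose S := [set x : 'rV[R]_n | `|x| = 1].
have S0 : S !=set0.
  pose u : 'rV[R]_n := const_mx 1.
  have u0 : u != 0.
    by apply/eqP => /rowP/(_ (Ordinal n_gt0))/eqP; rewrite !mxE oner_eq0.
  by exists (`|u|^-1 *: u); rewrite /S /= normrZV // unitfE normr_eq0.
have cS : compact S.
  apply: bounded_closed_compact; first by exists 1; split => // M M1 x /= ->; apply: ltW.
  apply: (@preimage_closed _ _ (@Num.norm _ 'rV[R]_n) [set 1]); last exact: closed_eq.
  by move=> x _; exact: norm_continuous.
have cN : {within S, continuous N} by apply: continuous_subspaceT; exact: isnorm_continuous.
have [c /[!inE] Sc cmin] := EVT_min_rV S0 cS cN.
have Nc : 0 < N c.
  apply: (isnorm_gt0 hN); apply: contraPneq Sc => ->.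
  by rewrite /S /= normr0 => /eqP; rewrite eq_sym oner_eq0.
exists (N c)^-1 => [|x]; first by rewrite invr_gt0.
have [->|x0] := eqVneq x 0; first by rewrite normr0 mulr_ge0 ?invr_ge0 ?isnorm_ge0 ?ltW.
have nx : 0 < `|x| by rewrite normr_gt0.
have := cmin (`|x|^-1 *: x); rewrite inE /S /= normrZV ?unitfE ?normr_eq0 // => /(_ erefl).
rewrite (isnormZ hN) ger0_norm ?invr_ge0 ?normr_ge0 // => h.
rewrite -(ler_pM2l Nc) mulrA mulfV ?gt_eqF // mul1r.
by rewrite -(ler_pM2r nx) mulrAC mulVf ?gt_eqF // mul1r in h.
Qed.

Lemma unit_ball_compact N : is_norm N -> compact (unit_ball N).
Proof.
move=> hN; have [C C0 hC] := mxnorm_le_isnorm hN.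
apply: bounded_closed_compact.
  exists C; split; first by rewrite num_real.
  move=> M CM x /= Nx; apply: le_trans (hC x) _; apply: le_trans (ltW CM).
  exact: ler_piMr (ltW C0) Nx.
apply: (@preimage_closed _ _ N [set r : R | r <= 1]); last exact: closed_le.
by move=> x _; exact: isnorm_continuous.
Qed.

End RowNorms.

Section Dual.
Variables (R : realType) (n : nat).
Implicit Types (c g : 'cV[R]_n) (x y : 'rV[R]_n).

Definition dualf c x : R := (x *m c) 0 0.

Lemma dualfE c x : dualf c x = \sum_i x 0 i * c i 0.
Proof. by rewrite /dualf mxE. Qed.

Lemma dualfDr c x y : dualf c (x + y) = dualf c x + dualf c y.
Proof. by rewrite /dualf mulmxDl mxE. Qed.

Lemma dualfZr c a x : dualf c (a *: x) = a * dualf c x.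
Proof. by rewrite /dualf -scalemxAl mxE. Qed.

Lemma dualfNr c x : dualf c (- x) = - dualf c x.
Proof. by rewrite -scaleN1r dualfZr mulN1r. Qed.

Lemma dualfDl c g x : dualf (c + g) x = dualf c x + dualf g x.
Proof. by rewrite /dualf mulmxDr mxE. Qed.

Lemma dualfZl a c x : dualf (a *: c) x = a * dualf c x.
Proof. by rewrite /dualf -scalemxAr mxE. Qed.

Lemma dualf_delta i x : dualf (delta_mx i 0) x = x 0 i.
Proof. by rewrite /dualf -colE mxE. Qed.

Lemma mul_outer m c (w : 'rV[R]_m) x : x *m (c *m w) = dualf c x *: w.
Proof. by rewrite mulmxA [x *m c]mx11_scalar mul_scalar_mx. Qed.

Lemma dualf_continuous c : continuous (dualf c).
Proof.
have -> : dualf c = fun x => \sum_i x 0 i * c i 0 by apply/funext => x; rewrite dualfE.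
apply: continuous_big; first exact: add_continuous.
by move=> i _ x; apply: continuousM; [exact: coord_continuous|exact: cst_continuous].
Qed.

Definition sqsum x : R := \sum_i x 0 i ^+ 2.

Lemma sqsum_continuous : continuous sqsum.
Proof.
apply: continuous_big; first exact: add_continuous.
by move=> i _ x; apply: continuousM; exact: coord_continuous.
Qed.

Lemma sqsum_eq0 x : sqsum x = 0 -> x = 0.
Proof.
move/eqP; rewrite psumr_eq0 => [/allP hx|i _]; last exact: sqr_ge0.
by apply/rowP => i; apply/eqP; rewrite mxE -sqrf_eq0 (eqP (hx i _)) ?mem_index_enum.
Qed.

Lemma sqsum_comb x y t :
  sqsum ((1 - t) *: x + t *: y) = (1 - t) * sqsum x + t * sqsum y - t * (1 - t) * sqsum (x - y).
Proof.
rewrite /sqsum !mulr_sumr -big_split -sumrB /=; apply: eq_bigr => i _; rewrite !mxE; ring.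
Qed.

End Dual.

Lemma finite_set_pos_lb (R : realType) (T : eqType) (S : set T) (f : T -> R) :
  finite_set S -> (forall e, S e -> 0 < f e) -> exists2 d, 0 < d & forall e, S e -> d <= f e.
Proof.
move=> /finite_seqP [s ->] {S}; elim: s => [|a s IH] hf; first by exists 1.
have [d d0 hd] : exists2 d, 0 < d & forall e, e \in s -> d <= f e.
  by apply: IH => e es; apply: hf; rewrite /= in_cons es orbT.
exists (Num.min d (f a)) => [|e]; first by rewrite lt_min d0 /= hf //= mem_head.
by rewrite /= in_cons => /orP[/eqP->|es]; rewrite ge_min ?lexx ?orbT ?hd.
Qed.

Section ExtremeMax.
Variables (R : realType) (n : nat) (N : 'rV[R]_n -> R).
Hypothesis hN : is_norm N.

(* Among the maximizers of [dualf c], a maximizer of the strictly convex [sqsum] is extreme. *)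
Lemma dualf_max_extreme c : exists p, extreme_point N p /\
  forall x, N x <= 1 -> dualf c x <= dualf c p.
Proof.
have B0 : unit_ball N !=set0 by exists 0; rewrite /unit_ball /= isnorm0.
have [p0 /[!inE] Bp0 p0max] := EVT_max_rV B0 (unit_ball_compact hN)
  (continuous_subspaceT (@dualf_continuous _ _ c)).
pose M := unit_ball N `&` [set x | dualf c x = dualf c p0].
have cM : compact M.
  apply: compact_closedI; first exact: unit_ball_compact.
  apply: (@preimage_closed _ _ (dualf c) [set dualf c p0]); last exact: closed_eq.
  by move=> x _; exact: dualf_continuous.
have M0 : M !=set0 by exists p0.
have [p /set_mem [Bp fp] pmax] := EVT_max_rV M0 cM (continuous_subspaceT (@sqsum_continuous _ _)).
have fmax x : N x <= 1 -> dualf c x <= dualf c p by move=> Nx; rewrite fp; apply: p0max; exact: mem_set.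
exists p; split => //; split => // y z t Ny Nz /andP[t0 t1] ep.
have fy := fmax y Ny; have fz := fmax z Nz.
have fpe : dualf c p = (1 - t) * dualf c y + t * dualf c z by rewrite ep dualfDr !dualfZr.
have My : M y by split => //=; rewrite -fp; nra.
have Mz : M z by split => //=; rewrite -fp; nra.
have qy := pmax y (mem_set My); have qz := pmax z (mem_set Mz).
have := sqsum_comb y z t; rewrite -ep => qp.
have q0 : 0 <= sqsum (y - z) by apply: sumr_ge0 => i _; apply: sqr_ge0.
have tt0 : 0 < t * (1 - t) by rewrite mulr_gt0 ?subr_gt0.
have : t * (1 - t) * sqsum (y - z) <= 0 by nra.
rewrite pmulr_rle0 // => qle0.
have /sqsum_eq0 /eqP : sqsum (y - z) = 0 by apply/eqP; rewrite eq_le qle0 q0.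
by rewrite subr_eq0 => /eqP.
Qed.

Lemma extreme_dual_le1 c : (forall e, extreme_point N e -> dualf c e <= 1) ->
  forall x, N x <= 1 -> dualf c x <= 1.
Proof. by have [p [ep pmax]] := dualf_max_extreme c => h x /pmax/le_trans; apply; apply: h. Qed.

End ExtremeMax.

Section PolyhedralBound.
Variables (R : realType) (n : nat) (N : 'rV[R]_n -> R).
Hypotheses (hN : is_norm N) (pN : polyhedral N).
Variables (c g : 'cV[R]_n).
Hypothesis c_le1 : forall x, N x <= 1 -> `|dualf c x| <= 1.
Hypothesis g_top : forall x, N x <= 1 -> dualf c x = 1 -> dualf g x = 0.

Lemma dualf_top_abs x : N x <= 1 -> `|dualf c x| = 1 -> dualf g x = 0.
Proof.
move=> Nx; have [c0|c0] := lerP 0 (dualf c x); first by rewrite ger0_norm //; apply: g_top.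
rewrite ltr0_norm // => /eqP; rewrite -dualfNr => /eqP cNx.
have Nmx : N (- x) <= 1 by rewrite (isnormN hN).
by apply/eqP; rewrite -oppr_eq0 -dualfNr (g_top Nmx cNx).
Qed.

(* By polyhedrality only finitely many extreme points have [`|dualf c e| < 1],
   so the slack [(1 - `|dualf c e|) / (`|dualf g e| + 1)] has a positive lower bound. *)
Lemma extreme_dual_bound : exists2 d, 0 < d &
  forall e, extreme_point N e -> `|dualf c e| + d * `|dualf g e| <= 1.
Proof.
pose S := [set e | extreme_point N e /\ `|dualf c e| < 1].
have S_fin : finite_set S by apply: sub_finite_set pN => e [].
have slack_gt0 e : S e -> 0 < (1 - `|dualf c e|) / (`|dualf g e| + 1).
  by move=> [_ lt1]; rewrite divr_gt0 ?subr_gt0 // ltr_wpDl.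
have [d d0 hd] := finite_set_pos_lb S_fin slack_gt0.
exists d => // e ee; have Ne : N e <= 1 by case: ee.
have [lt1|ge1] := ltP `|dualf c e| 1; last first.
  have e1 : `|dualf c e| = 1 by apply/eqP; rewrite eq_le ge1 c_le1.
  by rewrite dualf_top_abs // normr0 mulr0 addr0 e1.
have q0 : 0 <= `|dualf g e| by [].
have := ler_wpM2r q0 (hd e (conj ee lt1)); rewrite -lerBrDl => /le_trans; apply.
rewrite mulrAC ler_pdivrMr ?ltr_wpDl // ler_wpM2l ?lerDl // subr_ge0.
exact: ltW.
Qed.

Lemma polyhedral_dual_bound : exists2 d, 0 < d &
  forall x, N x <= 1 -> `|dualf c x| + d * `|dualf g x| <= 1.
Proof.
have [d d0 hE] := extreme_dual_bound; exists d => // x Nx.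
have sg_le1 (a : R) : `|Num.sg a| <= 1 by rewrite normr_sg; case: (_ != 0).
pose h := Num.sg (dualf c x) *: c + (Num.sg (dualf g x) * d) *: g.
have : dualf h x <= 1.
  apply: (extreme_dual_le1 hN) Nx => e ee; apply: le_trans (hE e ee).
  rewrite dualfDl !dualfZl; apply: le_trans (ler_norm _) _; apply: le_trans (ler_normD _ _) _.
  rewrite !normrM (ger0_norm (ltW d0)) -mulrA.
  by apply: lerD; apply: ler_piMl; rewrite ?sg_le1 ?mulr_ge0 // ltW.
rewrite dualfDl !dualfZl [`|dualf c x|]normrEsg [`|dualf g x|]normrEsg.
by rewrite mulrAC [_ * d]mulrC.
Qed.

End PolyhedralBound.

Section OpNorm.
Variables (R : realType) (n m : nat) (NX : 'rV[R]_n -> R) (NY : 'rV[R]_m -> R).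
Hypotheses (hX : is_norm NX) (hY : is_norm NY).
Local Notation Nop := (opnorm NX NY).

Lemma opnorm_has_ubound S : has_ubound [set NY (x *m S) | x in [set x | NX x <= 1]].
Proof.
have [C C0 hC] := mxnorm_le_isnorm hX.
exists (C * \sum_i NY (row i S)) => _ [x Nx <-]; rewrite mulmx_sum_row mulr_sumr.
apply: le_trans (isnorm_sum hY _ _) _; apply: ler_sum => i _.
rewrite (isnormZ hY); apply: ler_wpM2r; first exact: isnorm_ge0.
exact: le_trans (coord_le_mxnorm x i) (le_trans (hC x) (ler_piMr (ltW C0) Nx)).
Qed.

Lemma opnorm_ub S x : NX x <= 1 -> NY (x *m S) <= Nop S.
Proof. by move=> Nx; apply: (ub_le_sup (opnorm_has_ubound S)); exists x. Qed.

Lemma opnorm_le S b : (forall x, NX x <= 1 -> NY (x *m S) <= b) -> Nop S <= b.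
Proof.
move=> h; apply: ge_sup; last by move=> _ [x Nx <-]; apply: h.
by exists (NY (0 *m S)), 0 => //=; rewrite isnorm0.
Qed.

Lemma opnorm_ge0 S : 0 <= Nop S.
Proof. by apply: le_trans (isnorm_ge0 hY (0 *m S)) (opnorm_ub _ _); rewrite isnorm0. Qed.

Lemma opnormZ_le a S : Nop (a *: S) <= `|a| * Nop S.
Proof.
apply: opnorm_le => x Nx; rewrite -scalemxAr (isnormZ hY).
by apply: ler_wpM2l => //; apply: opnorm_ub.
Qed.

Lemma opnorm_is_norm : is_norm Nop.
Proof.
split=> [S|S S0|a S|S T]; first exact: opnorm_ge0.
- have xS0 (x : 'rV[R]_n) : x *m S = 0.
    have [->|x0] := eqVneq x 0; first by rewrite mul0mx.
    have NxV : NX ((NX x)^-1 *: x) <= 1.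
      by rewrite (isnormZ hX) ger0_norm ?invr_ge0 ?isnorm_ge0 // mulVf // gt_eqF // isnorm_gt0.
    have /(isnorm_eq0 hY) : NY (((NX x)^-1 *: x) *m S) = 0.
      by apply/eqP; rewrite eq_le isnorm_ge0 // andbT -S0 opnorm_ub.
    move/eqP; rewrite -scalemxAl scaler_eq0 invr_eq0 => /orP[/eqP/(isnorm_eq0 hX)/eqP|/eqP //].
    by rewrite (negbTE x0).
  by apply/row_matrixP => i; rewrite rowE xS0 row0.
- apply/eqP; rewrite eq_le opnormZ_le /=.
  have [->|a0] := eqVneq a 0; first by rewrite normr0 mul0r opnorm_ge0.
  rewrite -ler_pdivlMl ?normr_gt0 // -normfV.
  by rewrite -[X in Nop X <= _](scalerK a0 S) opnormZ_le.
- apply: opnorm_le => x Nx; rewrite mulmxDr; apply: le_trans (isnormD hY _ _) _.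
  by apply: lerD; apply: opnorm_ub.
Qed.

End OpNorm.

Section Segments.
Variables (R : realType) (V : lmodType R) (N : V -> R).
Hypothesis hN : is_norm N.

Lemma midpoint_eq (T E : V) : (1 - 2^-1) *: (T + E) + 2^-1 *: (T - E) = T.
Proof.
have -> : (1 - 2^-1 : R) = 2^-1 by field.
by rewrite -scalerDr addrACA subrr addr0 -mulr2n -(scaler_nat 2 T) scalerA mulVf ?pnatr_eq0 ?scale1r.
Qed.

Lemma sphere_not_extreme r : N r = 1 -> ~ extreme_point N r ->
  exists2 z, z != 0 & forall s, `|s| <= 1 -> N (r + s *: z) <= 1.
Proof.
move=> Nr /not_andP[]; first by rewrite Nr lexx.
move=> /existsNP[y /existsNP[z /existsNP[t /not_implyP[Ny /not_implyP[Nz]]]]].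
move=> /not_implyP[/andP[t0 t1] /not_implyP[ry yz]].
pose eps := Num.min t (1 - t).
have eps0 : 0 < eps by rewrite lt_min t0 subr_gt0.
exists (eps *: (z - y)) => [|s s1].
  by rewrite scaler_eq0 gt_eqF //= subr_eq0; apply/eqP => /esym.
(* moving along [z - y] by at most [eps] keeps both barycentric weights in [0, 1] *)
have /andP[q1 q2] : - eps <= s * eps <= eps.
  by rewrite -ler_norml normrM (ger0_norm (ltW eps0)) ler_piMl ?(ltW eps0).
have [et et'] : eps <= t /\ eps <= 1 - t by split; rewrite ge_min lexx ?orbT.
have -> : r + s *: (eps *: (z - y)) = (1 - t - s * eps) *: y + (t + s * eps) *: z.
  rewrite ry scalerA scalerBr [(1 - t - _) *: y]scalerBl [(t + _) *: z]scalerDl -!addrA.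
  by congr (_ + _); rewrite addrA addrC.
apply: le_trans (isnormD hN _ _) _; rewrite !(isnormZ hN) !ger0_norm; [|lra|lra].
have := isnorm_ge0 hN y; have := isnorm_ge0 hN z; nra.
Qed.

Lemma segment_cone_le1 r z a b : N r = 1 -> (forall s, `|s| <= 1 -> N (r + s *: z) <= 1) ->
  `|a| <= 1 -> `|b| * (1 + N z) <= 1 -> N (a *: r + b *: z) <= 1.
Proof.
move=> Nr hz a1 b1; have [ba|ab] := lerP `|b| `|a|.
  have [a0|a0] := eqVneq a 0.
    by move: ba; rewrite a0 normr0 normr_le0 => /eqP->; rewrite !scale0r addr0 isnorm0.
  have -> : a *: r + b *: z = a *: (r + (b / a) *: z).
    by rewrite scalerDr scalerA mulrCA mulfV // mulr1.
  rewrite (isnormZ hN) -[1]mul1r; apply: ler_pM => //; first exact: isnorm_ge0.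
  by apply: hz; rewrite normf_div ler_pdivrMr ?mul1r // normr_gt0.
apply: le_trans (isnormD hN _ _) _; rewrite !(isnormZ hN) Nr mulr1.
by apply: le_trans b1; rewrite mulrDr mulr1 lerD2r ltW.
Qed.

End Segments.

Lemma is_span_diff_uniq (R : realType) (V : vectType R) (F : set V) (U U' : {vspace V}) :
  is_span_diff F U -> is_span_diff F U' -> U = U'.
Proof. by move=> [sU mU] [sU' mU']; apply/eqP; rewrite eqEsubv mU // mU'. Qed.

Lemma face_dir_mem (R : realType) (V : vectType R) (N : V -> R) (F : set V) (U : {vspace V}) T E :
  is_norm N -> is_face N F -> is_span_diff F U -> F T ->
  N (T + E) <= 1 -> N (T - E) <= 1 -> E \in U.
Proof.
move=> hN [_ Fsph Fface] [sU _] FT NTE1 NTE2.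
have NT : N T = 1 := Fsph T FT.
have : N T <= 2^-1 * N (T + E) + 2^-1 * N (T - E).
  rewrite -{1}(midpoint_eq T E); apply: le_trans (isnormD hN _ _) _.
  by rewrite !(isnormZ hN) !ger0_norm ?invr_ge0 //; lra.
rewrite NT => NT2.
have NTE1' : N (T + E) = 1 by lra.
have NTE2' : N (T - E) = 1 by lra.
have half01 : 0 < (2^-1 : R) < 1 by rewrite invr_gt0 ltr0n /= invf_lt1 ?ltr1n.
have [FTE _] := Fface _ _ _ NTE1' NTE2' half01 (eq_ind_r F FT (midpoint_eq T E)).
by have := sU _ _ FTE FT; rewrite addrC addKr.
Qed.

Lemma rank1_factor (R : realType) n m (NY : 'rV[R]_m -> R) (T : 'M[R]_(n, m)) :
  is_norm NY -> \rank T = 1 -> exists c r, T = c *m r /\ NY r = 1.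
Proof.
move=> hY rT; have := mulmx_base T; move: (col_base T) (row_base T); rewrite rT => c r eT.
have r0 : r != 0 by apply/eqP => r0; move: rT; rewrite -eT r0 mulmx0 mxrank0.
have Nr : 0 < NY r := isnorm_gt0 hY r0.
exists (NY r *: c), ((NY r)^-1 *: r); split.
  by rewrite -eT -scalemxAl -scalemxAr scalerA mulfV ?gt_eqF // scale1r.
by rewrite (isnormZ hY) ger0_norm ?invr_ge0 ?ltW // mulVf ?gt_eqF.
Qed.

Lemma dim1_disjoint_support (K : fieldType) n m (U : {vspace 'M[K]_(n, m)}) A B :
  \dim U = 1%N -> A \in U -> B \in U -> A != 0 -> (forall i j, A i j * B i j = 0) -> B = 0.
Proof.
move=> dU AU BU A0 AB.
have UA : U = <[A]>%VS by apply/eqP; rewrite eq_sym eqEdim -memvE AU dim_vline A0 dU.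
move: BU AB; rewrite UA => /vlineP[k ->] AB; apply/matrixP => i j; rewrite !mxE.
move: (AB i j); rewrite mxE mulrCA => /eqP; rewrite !mulf_eq0.
by case/orP => [|/orP[]] /eqP->; rewrite ?mulr0 ?mul0r.
Qed.

Lemma outer_entry (K : fieldType) n m (g : 'cV[K]_n) (w : 'rV[K]_m) i j :
  (g *m w) i j = g i 0 * w 0 j.
Proof. by rewrite !mxE big_ord1. Qed.

Lemma dim1_outer_cols (K : fieldType) n m (U : {vspace 'M[K]_(n, m)}) (g : 'cV[K]_n) j1 j2 :
  \dim U = 1%N -> j1 != j2 -> g *m delta_mx 0 j1 \in U -> g *m delta_mx 0 j2 \in U -> g = 0.
Proof.
move=> dU j12 g1U g2U.
have col_outer j : g *m delta_mx 0 j = 0 -> g = 0.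
  by move=> /matrixP g0; apply/colP => i; have := g0 i j; rewrite outer_entry !mxE !eqxx mulr1.
have [/col_outer //|g10] := eqVneq (g *m delta_mx 0 j1) 0.
apply: col_outer; apply: dim1_disjoint_support dU g1U g2U g10 _ => i l.
rewrite !outer_entry !mxE mulrACA -natrM mulnb.
by rewrite eqxx /=; case: eqVneq => [->|]; rewrite ?(negbTE j12) ?andbF ?mulr0.
Qed.

Lemma dim1_outer_rows (K : fieldType) n m (U : {vspace 'M[K]_(n, m)}) (z : 'rV[K]_m) i1 i2 :
  \dim U = 1%N -> i1 != i2 -> delta_mx i1 0 *m z \in U -> delta_mx i2 0 *m z \in U -> z = 0.
Proof.
move=> dU i12 z1U z2U.
have row_outer i : delta_mx i 0 *m z = 0 -> z = 0.
  by move=> /matrixP z0; apply/rowP => j; have := z0 i j; rewrite outer_entry !mxE !eqxx mul1r.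
have [/row_outer //|z10] := eqVneq (delta_mx i1 0 *m z) 0.
apply: row_outer; apply: dim1_disjoint_support dU z1U z2U z10 _ => k l.
rewrite !outer_entry !mxE mulrACA -natrM mulnb.
by rewrite eqxx !andbT; case: eqVneq => [->|]; rewrite ?(negbTE i12) ?mul0r.
Qed.

Section RankOneEdge.
Variables (R : realType) (n m : nat) (NX : 'rV[R]_n -> R) (NY : 'rV[R]_m -> R).
Hypotheses (hX : is_norm NX) (hY : is_norm NY).
Local Notation Nop := (opnorm NX NY).
Variables (F : set 'M[R]_(n, m)) (U : {vspace 'M[R]_(n, m)}).
Hypotheses (hF : is_face Nop F) (hU : is_span_diff F U) (dimU : \dim U = 1%N).
Variables (c : 'cV[R]_n) (r : 'rV[R]_m).
Hypotheses (Nr : NY r = 1) (Fcr : F (c *m r)).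

Lemma rank1_dualf_le1 x : NX x <= 1 -> `|dualf c x| <= 1.
Proof.
move=> Nx; have [_ Fsph _] := hF.
by have := opnorm_ub hX hY (c *m r) Nx; rewrite mul_outer (isnormZ hY) Nr mulr1 Fsph.
Qed.

Lemma outer_dir_mem g w :
  (forall x s, NX x <= 1 -> `|s| <= 1 -> NY (dualf c x *: r + (s * dualf g x) *: w) <= 1) ->
  g *m w \in U.
Proof.
move=> h; have le1 s : `|s| <= 1 -> Nop (c *m r + s *: (g *m w)) <= 1.
  move=> s1; apply: opnorm_le => // x Nx.
  by rewrite mulmxDr -scalemxAr !mul_outer scalerA; apply: h.
apply: (face_dir_mem (opnorm_is_norm hX hY) hF hU Fcr).
  by rewrite -[g *m w]scale1r le1 ?normr1.
by rewrite -scaleN1r le1 ?normrN ?normr1.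
Qed.

(* Otherwise [r + s z] stays in the ball, and every [e_i z] is a direction of the edge. *)
Lemma rank1_edge_extreme : (1 < n)%N -> extreme_point NY r.
Proof.
move=> n_gt1; apply: contrapT => r_nonext.
have [z z0 hz] := sphere_not_extreme hY Nr r_nonext.
have [C C0 hC] := mxnorm_le_isnorm hX.
have Nz0 : 0 < 1 + NY z by rewrite ltr_pwDl ?isnorm_ge0.
pose kap := (C * (1 + NY z))^-1.
have kap0 : 0 < kap by rewrite invr_gt0 mulr_gt0.
have EU i : delta_mx i 0 *m z \in U.
  suff : kap *: (delta_mx i 0 *m z) \in U by rewrite rpredZeq gt_eqF.
  rewrite scalemxAl; apply: outer_dir_mem => x s Nx s1.
  rewrite dualfZl dualf_delta; apply: (segment_cone_le1 hY Nr hz (rank1_dualf_le1 Nx)).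
  have xi : `|x 0 i| <= C.
    exact: le_trans (coord_le_mxnorm x i) (le_trans (hC x) (ler_piMr (ltW C0) Nx)).
  have -> : `|s * (kap * x 0 i)| * (1 + NY z) = `|s| * `|x 0 i| / C.
    by rewrite !normrM (ger0_norm (ltW kap0)) /kap; field; rewrite !gt_eqF.
  by rewrite ler_pdivrMr // mul1r -[C]mul1r; apply: ler_pM.
have i01 : Ordinal (ltnW n_gt1) != Ordinal n_gt1 by [].
by move/eqP: z0; apply; apply: dim1_outer_rows dimU i01 (EU _) (EU _).
Qed.

(* Otherwise every [g e_j] is a direction of the edge. *)
Lemma rank1_edge_top_kernel g : (1 < m)%N -> polyhedral NX ->
  (forall x, NX x <= 1 -> dualf c x = 1 -> dualf g x = 0) -> g = 0.
Proof.
move=> m_gt1 pX g_top; have [d d0 hd] := polyhedral_dual_bound hX pX rank1_dualf_le1 g_top.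
have GU j : g *m delta_mx 0 j \in U.
  have e0 : 0 < NY (delta_mx 0 j : 'rV[R]_m).
    by apply: (isnorm_gt0 hY); apply/eqP => /matrixP/(_ 0 j)/eqP; rewrite !mxE !eqxx oner_eq0.
  pose k := d / NY (delta_mx 0 j).
  suff : k *: (g *m delta_mx 0 j) \in U by rewrite rpredZeq mulf_eq0 invr_eq0 !gt_eqF.
  rewrite scalemxAl; apply: outer_dir_mem => x s Nx s1.
  apply: le_trans (isnormD hY _ _) _; rewrite !(isnormZ hY) Nr mulr1.
  apply: le_trans (hd x Nx); rewrite lerD2l dualfZl !normrM (ger0_norm (ltW d0)).
  rewrite [`|_^-1|]ger0_norm ?invr_ge0 ?isnorm_ge0 //.
  have -> : `|s| * (d * (NY (delta_mx 0 j))^-1 * `|dualf g x|) * NY (delta_mx 0 j)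
    = `|s| * (d * `|dualf g x|) by field; rewrite gt_eqF.
  by apply: ler_piMl => //; exact: mulr_ge0 (ltW d0) (normr_ge0 _).
have j01 : Ordinal (ltnW m_gt1) != Ordinal m_gt1 by [].
exact: dim1_outer_cols dimU j01 (GU _) (GU _).
Qed.

Lemma extreme_top_annihilates E x : extreme_point NY r ->
  Nop (c *m r + E) <= 1 -> Nop (c *m r - E) <= 1 ->
  NX x <= 1 -> dualf c x = 1 -> x *m E = 0.
Proof.
move=> [_ r_ext] NE1 NE2 Nx cx.
have xT : x *m (c *m r) = r by rewrite mul_outer cx scale1r.
have half01 : 0 < (2^-1 : R) < 1 by rewrite invr_gt0 ltr0n /= invf_lt1 ?ltr1n.
have := r_ext _ _ _ (le_trans (opnorm_ub hX hY _ Nx) NE1) (le_trans (opnorm_ub hX hY _ Nx) NE2) half01.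
rewrite !mulmxDr mulmxN xT midpoint_eq => /(_ erefl) /addrI /eqP.
by rewrite -addr_eq0 -mulr2n -scaler_nat scaler_eq0 pnatr_eq0 /= => /eqP.
Qed.

Lemma rank1_not_rel_interior : (1 < n)%N -> (1 < m)%N -> polyhedral NX ->
  ~ rel_interior Nop F (c *m r).
Proof.
move=> n_gt1 m_gt1 pX [_ [U' [hU' [e e0 he]]]].
rewrite (is_span_diff_uniq hU' hU) in he.
have [_ Fsph _] := hF; have hN := opnorm_is_norm hX hY.
have [D DU D0] : exists2 D, D \in U & D != 0.
  by exists (vpick U); rewrite ?memv_pick // vpick0; apply: contra_eq_neq dimU => ->; rewrite dimv0.
pose s := e / (Nop D + 1).
have ND1 : 0 < Nop D + 1 by rewrite ltr_pwDr ?opnorm_ge0.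
have s0 : 0 < s by rewrite divr_gt0.
have NsD t : `|t| = s -> Nop (c *m r + t *: D) <= 1.
  move=> ts; rewrite Fsph //; apply: he; first exact: memvZ.
  rewrite (isnormZ hN) ts /s mulrAC ltr_pdivrMr // ltr_pM2l // ltrDl //.
have xD0 x : NX x <= 1 -> dualf c x = 1 -> x *m D = 0.
  move=> Nx cx; have h1 := NsD s (ger0_norm (ltW s0)).
  have h2 : Nop (c *m r - s *: D) <= 1 by rewrite -scaleNr NsD // normrN ger0_norm // ltW.
  have := extreme_top_annihilates (rank1_edge_extreme n_gt1) h1 h2 Nx cx.
  by rewrite -scalemxAr => /eqP; rewrite scaler_eq0 gt_eqF //= => /eqP.
have colD j : col j D = 0.
  apply: rank1_edge_top_kernel m_gt1 pX _ => x Nx cx.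
  by rewrite /dualf colE mulmxA -colE xD0 // !mxE.
move/eqP: D0; apply; apply/matrixP => i j.
by have /matrixP/(_ i 0) := colD j; rewrite !mxE.
Qed.

End RankOneEdge.

Theorem mainTheorem17 (R : realType) (n m : nat)
  (NX : 'rV[R]_n -> R) (NY : 'rV[R]_m -> R) :
  (1 < n)%N -> (1 < m)%N ->
  is_norm NX -> is_norm NY -> polyhedral NX -> polyhedral NY ->
  forall (F : set 'M[R]_(n, m)), is_edge (opnorm NX NY) F ->
  forall T : 'M[R]_(n, m), rel_interior (opnorm NX NY) F T -> \rank T != 1%N.
Proof.
move=> n_gt1 m_gt1 hX hY pX _ F [hF [U [hU dimU]]] T relT.
apply/negP => /eqP /(rank1_factor hY) [c [r [eT Nr]]].
have [FT _] := relT; rewrite eT in FT relT.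
exact: (rank1_not_rel_interior hX hY hF hU dimU Nr FT n_gt1 m_gt1 pX relT).
Qed.
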